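(* Let $(X,\le,\ast)$ be a semiframe and $F\subseteq X$ a semifilter. Then $F$ is regular if and only if $F$ is weakly regular and strongly compatible.
   Context: A semiframe is a triple $(X,\le,\ast)$ where $(X,\le)$ is a complete join-semilattice ($\bot_X=\bigvee\varnothing$) and $\ast$ is a compatibility relation: commutative; $x\ast x$ for every $x\neq\bot_X$; and $x\ast\bigvee Y$ iff $x\ast y$ for some $y\in Y$. A semifilter is a nonempty, up-closed subset $F$ with $y\ast y'$ for all $y,y'\in F$ (compatible). For $F\subseteq X$ write $x\ast F$ when $x\ast y$ for all $y\in F$, and $F^\ast=\{x\in X\mid x\ast F\}$. $F$ is strongly compatible when $F^\ast$ is nonempty and compatible. An element $x$ is transitive when $x\neq\bot_X$ and $x'\ast x\ast x''$ implies $x'\ast x''$. The abstract community of $F$ is $\mathcal K(F)=\bigvee\{z\in X\mid \neg(z\ast c_F)\}$ where $c_F=\bigvee\{y\in X\mid \neg(y\ast F)\}$ (equivalently $\mathcal K(F)=\bigvee\{x\in X\mid x^\ast\subseteq F^\ast\}$ with $x^\ast=\{x'\mid x'\ast x\}$). $F$ is weakly regular when $\mathcal K(F)\in F$, and regular when $\mathcal K(F)\in F$ and $\mathcal K(F)$ is transitive. *)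

Record Semiframe := {
  carrier :> Type;
  le : carrier -> carrier -> Prop;
  sup : (carrier -> Prop) -> carrier;
  comp : carrier -> carrier -> Prop;           (* compatibility relation  x * y *)
  le_refl : forall x, le x x;
  le_trans : forall x y z, le x y -> le y z -> le x z;
  le_antisym : forall x y, le x y -> le y x -> x = y;
  sup_ub : forall (Y : carrier -> Prop) y, Y y -> le y (sup Y);
  sup_least : forall (Y : carrier -> Prop) z, (forall y, Y y -> le y z) -> le (sup Y) z;
  comp_sym : forall x y, comp x y -> comp y x;
  comp_refl : forall x, x <> sup (fun _ => False) -> comp x x;
  comp_sup : forall x (Y : carrier -> Prop), comp x (sup Y) <-> exists y, Y y /\ comp x y
}.

Arguments le {_} _ _.
Arguments sup {_} _.
Arguments comp {_} _ _.

Section Defs.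
Variable X : Semiframe.

Definition bot : X := sup (fun _ => False).

Definition compatible (F : X -> Prop) : Prop :=
  forall y y', F y -> F y' -> comp y y'.

Definition semifilter (F : X -> Prop) : Prop :=
  (exists x, F x) /\
  (forall x y, F x -> le x y -> F y) /\
  compatible F.

Definition comp_set (x : X) (F : X -> Prop) : Prop := forall y, F y -> comp x y.

Definition star (F : X -> Prop) : X -> Prop := fun x => comp_set x F.

Definition strongly_compatible (F : X -> Prop) : Prop :=
  (exists x, star F x) /\ compatible (star F).

Definition transitive (x : X) : Prop :=
  x <> bot /\ forall x' x'', comp x' x -> comp x x'' -> comp x' x''.

Definition cF (F : X -> Prop) : X := sup (fun y => ~ comp_set y F).

Definition community (F : X -> Prop) : X := sup (fun z => ~ comp z (cF F)).

Definition weakly_regular (F : X -> Prop) : Prop := F (community F).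

Definition regular (F : X -> Prop) : Prop :=
  F (community F) /\ transitive (community F).

End Defs.

Arguments bot {_}.
Arguments compatible {_} _.
Arguments semifilter {_} _.
Arguments comp_set {_} _ _.
Arguments star {_} _ _.
Arguments strongly_compatible {_} _.
Arguments transitive {_} _.
Arguments cF {_} _.
Arguments community {_} _.
Arguments weakly_regular {_} _.
Arguments regular {_} _.

(* Write K for the abstract community K(F).  The whole argument rests on one
   observation: anything compatible with K is compatible with all of F, i.e.
   x * K implies x in F^*.  Indeed, if x were not in F^* then x would be one
   of the elements whose join is c_F, so c_F * x; but x * K means x * z for
   some z with not (z * c_F), a contradiction.  Conversely, if K lies in the
   compatible set F then every element of F^* is compatible with K.  Hence,
   when K is in F, the elements of F^* are the elements compatible with K,
   and transitivity of K becomes the same thing as compatibility of F^*.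
   The remaining clauses are bookkeeping: K in F makes F^* nonempty (it
   contains K), and K is not bottom since nothing is compatible with bottom. *)

From Stdlib Require Import Classical.

Section Community.
Variable X : Semiframe.

Lemma not_comp_bot (x : X) : ~ comp x bot.
Proof.
  intro Hxbot. apply (proj1 (comp_sup X x _)) in Hxbot.
  destruct Hxbot as [y [[] _]].
Qed.

Lemma compatible_in_star (F : X -> Prop) (x : X) :
  compatible F -> F x -> star F x.
Proof. intros Hcomp Hx y Hy. exact (Hcomp x y Hx Hy). Qed.

Lemma comp_community_in_star (F : X -> Prop) (x : X) :
  comp x (community F) -> star F x.
Proof.
  intro HxK. apply (proj1 (comp_sup X x _)) in HxK.
  destruct HxK as [z [Hz_not_comp_cF Hxz]].
  destruct (classic (comp_set x F)) as [Hx_star | Hx_not_star]; [exact Hx_star |].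
  exfalso. apply Hz_not_comp_cF. apply (proj2 (comp_sup X z _)).
  exists x. split; [exact Hx_not_star | apply comp_sym; exact Hxz].
Qed.

Lemma star_compatible_of_transitive (F : X -> Prop) :
  F (community F) -> transitive (community F) -> compatible (star F).
Proof.
  intros HK [_ Htrans] a b Ha Hb.
  apply Htrans; [exact (Ha _ HK) | apply comp_sym; exact (Hb _ HK)].
Qed.

Lemma transitive_of_star_compatible (F : X -> Prop) :
  compatible F -> F (community F) -> compatible (star F) ->
  transitive (community F).
Proof.
  intros Hcomp HK Hstar. split.
  - intro HKbot. apply (not_comp_bot (community F)).
    rewrite <- HKbot. exact (Hcomp _ _ HK HK).
  - intros a b HaK HKb. apply Hstar.
    + exact (comp_community_in_star F a HaK).
    + apply comp_community_in_star, comp_sym. exact HKb.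
Qed.

End Community.

Theorem theorem9p29 (X : Semiframe) (F : X -> Prop) :
  semifilter F ->
  (regular F <-> weakly_regular F /\ strongly_compatible F).
Proof.
  intros [_ [_ Hcomp]]. split.
  - intros [HK Htrans]. split; [exact HK |]. split.
    + exists (community F). exact (compatible_in_star X F _ Hcomp HK).
    + exact (star_compatible_of_transitive X F HK Htrans).
  - intros [HK [_ Hstar]]. split; [exact HK |].
    exact (transitive_of_star_compatible X F Hcomp HK Hstar).
Qed.
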